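(* Let $1<p<\infty$ and $q=p/(p-1)$. Then for all $u,v\ge0$ and all $\beta\in(0,1)$, $$\min\left\{\frac1{\beta p},\frac1{(1-\beta)q}\right\}\left(\beta u^p+(1-\beta)v^q-u^{\beta p}v^{(1-\beta)q}\right)\le\frac{u^p}{p}+\frac{v^q}{q}-uv\le\max\left\{\frac1{\beta p},\frac1{(1-\beta)q}\right\}\left(\beta u^p+(1-\beta)v^q-u^{\beta p}v^{(1-\beta)q}\right).$$ *)

From Stdlib Require Import Reals.
Open Scope R_scope.

(* Real power x^y for x >= 0 and y > 0, with the convention 0^y = 0.
   (Stdlib's Rpower is exp (y * ln x), which gives 1 at x = 0.) *)
Definition rpow (x y : R) : R := if Req_EM_T x 0 then 0 else Rpower x y.

(* With x = p ln u and y = q ln v, both the Young deficit u^p/p + v^q/q - uv and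
   the weighted AM-GM deficit are Jensen gaps
   g(t) = t e^x + (1 - t) e^y - e^(t x + (1 - t) y) of exp, at t = 1/p and t = beta.
   Convexity of exp makes g(t)/t nonincreasing and, by the symmetry
   t <-> 1 - t, g(t)/(1 - t) nondecreasing on (0, 1); comparing g(1/p) with
   g(beta) through these two ratios gives the constants 1/(beta p) and
   1/((1 - beta) q). *)
From Stdlib Require Import Reals Lra Psatz.
Open Scope R_scope.

Lemma Rdiv_mult_le (a b c d : R) : 0 < b -> a * c <= b * d -> a / b * c <= d.
Proof.
  intros Hb H.
  replace (a / b * c) with (/ b * (a * c)) by (field; lra).
  replace d with (/ b * (b * d)) by (field; lra).
  apply Rmult_le_compat_l; [apply Rlt_le, Rinv_0_lt_compat|]; lra.
Qed.

Lemma Rle_div_mult (a b c d : R) : 0 < b -> b * d <= a * c -> d <= a / b * c.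
Proof.
  intros Hb H.
  replace (a / b * c) with (/ b * (a * c)) by (field; lra).
  replace d with (/ b * (b * d)) by (field; lra).
  apply Rmult_le_compat_l; [apply Rlt_le, Rinv_0_lt_compat|]; lra.
Qed.

Lemma Rmin_Rmax_mult_sandwich (a b D E : R) : 0 <= D -> E = a * D \/ E = b * D ->
  Rmin a b * D <= E /\ E <= Rmax a b * D.
Proof.
  intros HD [-> | ->]; split; apply Rmult_le_compat_r;
    auto using Rmin_l, Rmin_r, Rmax_l, Rmax_r.
Qed.

Lemma exp_ge_tangent (m z : R) : exp m * (1 + (z - m)) <= exp z.
Proof.
  replace (exp z) with (exp m * exp (z - m)) by (rewrite <- exp_plus; f_equal; ring).
  apply Rmult_le_compat_l; [apply Rlt_le, exp_pos | apply exp_ineq1_le].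
Qed.

Lemma exp_convex (x y t : R) : 0 <= t <= 1 ->
  exp (t * x + (1 - t) * y) <= t * exp x + (1 - t) * exp y.
Proof.
  intros Ht.
  set (m := t * x + (1 - t) * y).
  pose proof (exp_ge_tangent m x) as Hx; pose proof (exp_ge_tangent m y) as Hy.
  assert (Hm : exp m = t * (exp m * (1 + (x - m))) + (1 - t) * (exp m * (1 + (y - m)))).
  { unfold m; ring. }
  nra.
Qed.

Definition exp_jensen_gap (x y t : R) : R :=
  t * exp x + (1 - t) * exp y - exp (t * x + (1 - t) * y).

Lemma exp_jensen_gap_sym (x y t : R) :
  exp_jensen_gap x y t = exp_jensen_gap y x (1 - t).
Proof.
  unfold exp_jensen_gap.
  replace ((1 - t) * y + (1 - (1 - t)) * x) with (t * x + (1 - t) * y) by ring.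
  ring.
Qed.

Lemma exp_jensen_gap_ge0 (x y t : R) : 0 <= t <= 1 -> 0 <= exp_jensen_gap x y t.
Proof. intros Ht; unfold exp_jensen_gap; pose proof (exp_convex x y t Ht); lra. Qed.

(* Writing s = (s/t) t, the point s x + (1 - s) y is the (s/t)-combination of
   t x + (1 - t) y and y, and convexity at that combination is the claim. *)
Lemma exp_jensen_gap_scale (x y s t : R) : 0 <= s <= t -> 0 < t ->
  s * exp_jensen_gap x y t <= t * exp_jensen_gap x y s.
Proof.
  intros Hs Ht.
  set (r := s / t).
  assert (Hsr : s = r * t) by (unfold r; field; lra).
  assert (Hr : 0 <= r <= 1) by nra.
  pose proof (exp_convex (t * x + (1 - t) * y) y r Hr) as Hconv.
  replace (r * (t * x + (1 - t) * y) + (1 - r) * y) with (s * x + (1 - s) * y)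
    in Hconv by (rewrite Hsr; ring).
  unfold exp_jensen_gap; rewrite Hsr in Hconv |- *.
  nra.
Qed.

Lemma exp_jensen_gap_scale_compl (x y s t : R) : s <= t <= 1 -> s < 1 ->
  (1 - t) * exp_jensen_gap x y s <= (1 - s) * exp_jensen_gap x y t.
Proof.
  intros Hst Hs.
  rewrite (exp_jensen_gap_sym x y s), (exp_jensen_gap_sym x y t).
  apply exp_jensen_gap_scale; lra.
Qed.

Lemma exp_jensen_gap_compare (x y s t : R) : 0 < s < 1 -> 0 < t < 1 ->
  Rmin (s / t) ((1 - s) / (1 - t)) * exp_jensen_gap x y t <= exp_jensen_gap x y s /\
  exp_jensen_gap x y s <= Rmax (s / t) ((1 - s) / (1 - t)) * exp_jensen_gap x y t.
Proof.
  intros Hs Ht.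
  pose proof (exp_jensen_gap_ge0 x y t ltac:(lra)) as Hgt.
  destruct (Rle_lt_dec s t) as [Hst | Hts].
  - pose proof (exp_jensen_gap_scale x y s t ltac:(lra) ltac:(lra)) as Hlo.
    pose proof (exp_jensen_gap_scale_compl x y s t ltac:(lra) ltac:(lra)) as Hhi.
    split.
    + apply Rle_trans with (s / t * exp_jensen_gap x y t).
      * apply Rmult_le_compat_r; [lra | apply Rmin_l].
      * apply Rdiv_mult_le; lra.
    + apply Rle_trans with ((1 - s) / (1 - t) * exp_jensen_gap x y t).
      * apply Rle_div_mult; lra.
      * apply Rmult_le_compat_r; [lra | apply Rmax_r].
  - pose proof (exp_jensen_gap_scale x y t s ltac:(lra) ltac:(lra)) as Hhi.
    pose proof (exp_jensen_gap_scale_compl x y t s ltac:(lra) ltac:(lra)) as Hlo.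
    split.
    + apply Rle_trans with ((1 - s) / (1 - t) * exp_jensen_gap x y t).
      * apply Rmult_le_compat_r; [lra | apply Rmin_r].
      * apply Rdiv_mult_le; lra.
    + apply Rle_trans with (s / t * exp_jensen_gap x y t).
      * apply Rle_div_mult; lra.
      * apply Rmult_le_compat_r; [lra | apply Rmax_l].
Qed.

Lemma rpow_0_l (y : R) : rpow 0 y = 0.
Proof. unfold rpow; destruct (Req_EM_T 0 0); [reflexivity | contradiction]. Qed.

Lemma rpow_ge0 (x y : R) : 0 <= rpow x y.
Proof.
  unfold rpow; destruct (Req_EM_T x 0); [lra|].
  unfold Rpower; apply Rlt_le, exp_pos.
Qed.

Lemma rpow_exp_ln (x y : R) : 0 < x -> rpow x y = exp (y * ln x).
Proof. intros Hx; unfold rpow; destruct (Req_EM_T x 0); [lra | reflexivity]. Qed.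

Lemma young_deficit_jensen_gap (p q u v : R) : 1 < p -> q = p / (p - 1) ->
  0 < u -> 0 < v ->
  rpow u p / p + rpow v q / q - u * v
  = exp_jensen_gap (p * ln u) (q * ln v) (1 / p).
Proof.
  intros Hp Hq Hu Hv.
  rewrite !rpow_exp_ln by assumption.
  unfold exp_jensen_gap.
  replace (u * v) with (exp (ln u + ln v)) by (rewrite exp_plus, !exp_ln; auto).
  replace (1 / p * (p * ln u) + (1 - 1 / p) * (q * ln v)) with (ln u + ln v)
    by (rewrite Hq; field; lra).
  rewrite Hq; field; lra.
Qed.

Lemma weighted_amgm_deficit_jensen_gap (p q u v beta : R) : 0 < u -> 0 < v ->
  beta * rpow u p + (1 - beta) * rpow v q
    - rpow u (beta * p) * rpow v ((1 - beta) * q)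
  = exp_jensen_gap (p * ln u) (q * ln v) beta.
Proof.
  intros Hu Hv.
  rewrite !rpow_exp_ln by assumption.
  unfold exp_jensen_gap; rewrite <- exp_plus.
  do 2 f_equal; ring.
Qed.

Theorem corollary3p1 (p q u v beta : R)
  (hp : 1 < p) (hq : q = p / (p - 1))
  (hu : 0 <= u) (hv : 0 <= v) (hb0 : 0 < beta) (hb1 : beta < 1) :
  Rmin (1 / (beta * p)) (1 / ((1 - beta) * q)) *
    (beta * rpow u p + (1 - beta) * rpow v q
       - rpow u (beta * p) * rpow v ((1 - beta) * q))
  <= rpow u p / p + rpow v q / q - u * v
  /\
  rpow u p / p + rpow v q / q - u * v
  <= Rmax (1 / (beta * p)) (1 / ((1 - beta) * q)) *
    (beta * rpow u p + (1 - beta) * rpow v q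
       - rpow u (beta * p) * rpow v ((1 - beta) * q)).
Proof.
  assert (Hq : 0 < q) by (rewrite hq; apply Rdiv_lt_0_compat; lra).
  destruct (Req_dec u 0) as [-> | Hu0].
  { rewrite !rpow_0_l; apply Rmin_Rmax_mult_sandwich.
    - pose proof (rpow_ge0 v q); nra.
    - right; field; lra. }
  destruct (Req_dec v 0) as [-> | Hv0].
  { rewrite !rpow_0_l; apply Rmin_Rmax_mult_sandwich.
    - pose proof (rpow_ge0 u p); nra.
    - left; field; lra. }
  rewrite young_deficit_jensen_gap, weighted_amgm_deficit_jensen_gap by lra.
  replace (1 / (beta * p)) with (1 / p / beta) by (field; lra).
  replace (1 / ((1 - beta) * q)) with ((1 - 1 / p) / (1 - beta))
    by (rewrite hq; field; lra).
  apply exp_jensen_gap_compare; split; try lra.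
  - apply Rdiv_lt_0_compat; lra.
  - apply Rmult_lt_reg_r with p; [lra|]; field_simplify; lra.
Qed.
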